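(* Let $X$ be a complex Banach space and let $a,b\in\mathcal{L}(X)$ both have g-Drazin inverses. If $aba=0$ and $ab^2=0$, then $a+b$ has a g-Drazin inverse.
   Context: $\mathcal{L}(X)$ denotes the Banach algebra of bounded linear operators on the complex Banach space $X$. An element $a$ of a unital Banach algebra $\mathcal{A}$ is quasinilpotent if $\lim_{n\to\infty}\|a^n\|^{1/n}=0$. An element $a\in\mathcal{A}$ has a g-Drazin (generalized Drazin) inverse if there exists $x\in\mathcal{A}$ with $x=xax$, $ax=xa$, and $a-a^2x$ quasinilpotent; such $x$ is unique and is denoted $a^d$. *)

From Stdlib Require Import Reals.
Open Scope R_scope.

Record Cx := mkCx { Re : R; Im : R }.
Definition Cadd (z w : Cx) : Cx := mkCx (Re z + Re w) (Im z + Im w).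
Definition Cmul (z w : Cx) : Cx :=
  mkCx (Re z * Re w - Im z * Im w) (Re z * Im w + Im z * Re w).
Definition Cone : Cx := mkCx 1 0.
Definition Cmod (z : Cx) : R := sqrt (Re z ^ 2 + Im z ^ 2).

Record CBanach := mkCBanach {
  car :> Type;
  vzero : car;
  vadd : car -> car -> car;
  vopp : car -> car;
  vscal : Cx -> car -> car;
  vnorm : car -> R;
  vaddA : forall x y z, vadd x (vadd y z) = vadd (vadd x y) z;
  vaddC : forall x y, vadd x y = vadd y x;
  vadd0 : forall x, vadd x vzero = x;
  vaddN : forall x, vadd x (vopp x) = vzero;
  vscalA : forall c d x, vscal c (vscal d x) = vscal (Cmul c d) x;
  vscal1 : forall x, vscal Cone x = x;
  vscalDr : forall c x y, vscal c (vadd x y) = vadd (vscal c x) (vscal c y);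
  vscalDl : forall c d x, vscal (Cadd c d) x = vadd (vscal c x) (vscal d x);
  vnorm_ge0 : forall x, 0 <= vnorm x;
  vnorm_eq0 : forall x, vnorm x = 0 -> x = vzero;
  vnorm_triangle : forall x y, vnorm (vadd x y) <= vnorm x + vnorm y;
  vnorm_scal : forall c x, vnorm (vscal c x) = Cmod c * vnorm x;
  vcomplete : forall u : nat -> car,
    (forall eps, 0 < eps -> exists N, forall m n, (N <= m)%nat -> (N <= n)%nat ->
        vnorm (vadd (u m) (vopp (u n))) < eps) ->
    exists l, forall eps, 0 < eps -> exists N, forall n, (N <= n)%nat ->
        vnorm (vadd (u n) (vopp l)) < eps
}.

Arguments vzero {_}.
Arguments vadd {_}.
Arguments vopp {_}.
Arguments vscal {_}.
Arguments vnorm {_}.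

Definition bounded_linear {X : CBanach} (f : X -> X) : Prop :=
  (forall x y, f (vadd x y) = vadd (f x) (f y)) /\
  (forall c x, f (vscal c x) = vscal c (f x)) /\
  (exists M, forall x, vnorm (f x) <= M * vnorm x).

Definition opzero {X : CBanach} : X -> X := fun _ => vzero.
Definition opmul {X : CBanach} (f g : X -> X) : X -> X := fun v => f (g v).
Definition opadd {X : CBanach} (f g : X -> X) : X -> X := fun v => vadd (f v) (g v).
Definition opsub {X : CBanach} (f g : X -> X) : X -> X := fun v => vadd (f v) (vopp (g v)).
Fixpoint oppow {X : CBanach} (f : X -> X) (n : nat) : X -> X :=
  match n with O => fun v => v | S k => opmul f (oppow f k) end.

Definition is_opnorm {X : CBanach} (f : X -> X) (r : R) : Prop :=
  is_lub (fun y => exists x : X, vnorm x <= 1 /\ y = vnorm (f x)) r.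

Definition nroot (n : nat) (x : R) : R :=
  if Rle_dec x 0 then 0 else Rpower x (/ INR n).

Definition quasinilpotent {X : CBanach} (a : X -> X) : Prop :=
  exists r : nat -> R, (forall n, is_opnorm (oppow a n) (r n)) /\
    Un_cv (fun n => nroot n (r n)) 0.

Definition has_gDrazin {X : CBanach} (a : X -> X) : Prop :=
  exists x : X -> X, bounded_linear x /\
    x = opmul x (opmul a x) /\
    opmul a x = opmul x a /\
    quasinilpotent (opsub a (opmul (opmul a a) x)).

(* Put c = a + b.  The engine is the additive theorem of Djordjevic and
   Wei: if p and q are g-Drazin invertible and pq = 0, then so is p + q.
   - ca = a^2 + ba, where a^2 is g-Drazin invertible, ba is nilpotent since
     (ba)^3 = b(aba)ba = 0, and a^2 . ba = a(aba) = 0;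
   - cb = ab + b^2, where ab is nilpotent since (ab)^2 = (aba)b = 0, b^2 is
     g-Drazin invertible, and ab . b^2 = (ab^2)b = 0.
   By Cline's formula ac and bc are g-Drazin invertible; since
   (ac)(bc) = a^2ba + a^2b^2 + ab^2a + ab^3 = 0, so is c^2 = ac + bc, and an
   operator whose square is g-Drazin invertible is itself g-Drazin invertible.

   The additive theorem is proved by splitting p = p1 + p2 and q = q1 + q2 into
   group-invertible parts (p1 = p^2 p^d) and quasinilpotent parts: p1 + q1 has an
   explicit group inverse, and adding the quasinilpotent q2 on the right, then p2
   on the left, is done with explicit Neumann-type series. *)

From Stdlib Require Import Reals Lra Lia ZArith List FunctionalExtensionality ClassicalEpsilon.
Open Scope R_scope.

Arguments vaddA {_}. Arguments vaddC {_}. Arguments vadd0 {_}. Arguments vaddN {_}.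
Arguments vscal1 {_}. Arguments vscalDr {_}. Arguments vscalDl {_}.
Arguments vnorm_ge0 {_}. Arguments vnorm_eq0 {_}. Arguments vnorm_triangle {_}.
Arguments vnorm_scal {_}. Arguments vcomplete {_}.

Section AddGroup.
Context {X : CBanach}.

Lemma vadd0l (x : X) : vadd vzero x = x.
Proof. rewrite vaddC; apply vadd0. Qed.

Lemma vaddNl (x : X) : vadd (vopp x) x = vzero.
Proof. rewrite vaddC; apply vaddN. Qed.

Lemma vadd_cancel (x y z : X) : vadd x y = vadd x z -> y = z.
Proof.
  intros H. rewrite <- (vadd0l y), <- (vadd0l z), <- (vaddNl x), <- !vaddA, H.
  reflexivity.
Qed.

Lemma vopp_unique (x y : X) : vadd x y = vzero -> y = vopp x.
Proof. intros H. apply (vadd_cancel x). rewrite H, vaddN. reflexivity. Qed.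

Lemma vsub_eq0 (p q : X) : vadd p (vopp q) = vzero -> p = q.
Proof. intros H. apply (vadd_cancel (vopp q)). rewrite vaddNl, vaddC. exact H. Qed.

Lemma vopp0 : vopp (@vzero X) = vzero.
Proof. symmetry; apply vopp_unique, vadd0. Qed.

Lemma vopp_opp (x : X) : vopp (vopp x) = x.
Proof. symmetry; apply vopp_unique, vaddNl. Qed.

Lemma vopp_add (x y : X) : vopp (vadd x y) = vadd (vopp x) (vopp y).
Proof.
  symmetry; apply vopp_unique.
  rewrite vaddA, (vaddC x y), <- (vaddA y x), vaddN, vadd0, vaddN. reflexivity.
Qed.

Lemma vadd4 (a b c d : X) : vadd (vadd a b) (vadd c d) = vadd (vadd a c) (vadd b d).
Proof. rewrite <- !vaddA. f_equal. rewrite !vaddA. f_equal. apply vaddC. Qed.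

(* Integer multiples z.x, built as n.x - m.x with natural multiples; they are
   the coefficients of the normal forms used by the tactic [abel] below. *)
Fixpoint nmul (n : nat) (x : X) : X :=
  match n with O => vzero | S n => vadd x (nmul n x) end.

Lemma nmul_add m n x : nmul (m + n) x = vadd (nmul m x) (nmul n x).
Proof. induction m; simpl. now rewrite vadd0l. now rewrite IHm, vaddA. Qed.

Definition dmul (m n : nat) (x : X) : X := vadd (nmul m x) (vopp (nmul n x)).

Lemma dmul_eq m n m' n' x : (m + n' = m' + n)%nat -> dmul m n x = dmul m' n' x.
Proof.
  intros H. unfold dmul.
  assert (cancel : forall p q r : X, vadd (vadd p (vopp q)) (vadd q r) = vadd p r).
  { intros p q r. rewrite <- vaddA. f_equal. rewrite vaddA, vaddNl. apply vadd0l. }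
  apply (vadd_cancel (vadd (nmul n x) (nmul n' x))).
  rewrite !(vaddC (vadd (nmul n x) (nmul n' x))), cancel.
  rewrite (vaddC (nmul n x) (nmul n' x)), cancel, <- !nmul_add, H. reflexivity.
Qed.

Lemma dmul_add a b c d x : vadd (dmul a b x) (dmul c d x) = dmul (a + c) (b + d) x.
Proof. unfold dmul. rewrite !nmul_add, vopp_add. apply vadd4. Qed.

Definition zmul (z : Z) (x : X) : X := dmul (Z.to_nat z) (Z.to_nat (- z)) x.

Lemma zmul_add a b x : zmul (a + b) x = vadd (zmul a x) (zmul b x).
Proof. unfold zmul. rewrite dmul_add. apply dmul_eq. lia. Qed.

Lemma zmul_opp a x : zmul (- a) x = vopp (zmul a x).
Proof. unfold zmul, dmul. rewrite Z.opp_involutive, vopp_add, vopp_opp. apply vaddC. Qed.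

Lemma zmul0 x : zmul 0 x = vzero.
Proof. unfold zmul, dmul. simpl. rewrite vopp0. apply vadd0. Qed.

Lemma zmul1 x : zmul 1 x = x.
Proof. unfold zmul, dmul. simpl. rewrite vopp0, !vadd0. reflexivity. Qed.

(* Syntax of additive expressions over a list of atoms, their value, and their
   normal form: the list of integer coefficients of the atoms. *)
Inductive aexp := AAt (n : nat) | A0 | AAdd (a b : aexp) | AOpp (a : aexp).

Fixpoint aeval (env : list X) (e : aexp) : X :=
  match e with
  | AAt n => nth n env vzero
  | A0 => vzero
  | AAdd a b => vadd (aeval env a) (aeval env b)
  | AOpp a => vopp (aeval env a)
  end.

Fixpoint ladd (l1 l2 : list Z) : list Z :=
  match l1, l2 with
  | nil, l => l
  | l, nil => l
  | a :: l1', b :: l2' => (a + b)%Z :: ladd l1' l2'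
  end.

Fixpoint atoml (n : nat) : list Z :=
  match n with O => 1%Z :: nil | S n => 0%Z :: atoml n end.

Fixpoint anorm (e : aexp) : list Z :=
  match e with
  | AAt n => atoml n
  | A0 => nil
  | AAdd a b => ladd (anorm a) (anorm b)
  | AOpp a => map Z.opp (anorm a)
  end.

Fixpoint lsem (env : list X) (l : list Z) : X :=
  match l with
  | nil => vzero
  | z :: l' => vadd (zmul z (nth 0 env vzero)) (lsem (tl env) l')
  end.

Lemma lsem_add env l1 l2 : lsem env (ladd l1 l2) = vadd (lsem env l1) (lsem env l2).
Proof.
  revert env l2; induction l1 as [|a l1 IH]; intros env l2; simpl.
  - now rewrite vadd0l.
  - destruct l2 as [|b l2]; simpl. now rewrite vadd0.
    rewrite IH, zmul_add. apply vadd4.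
Qed.

Lemma lsem_opp env l : lsem env (map Z.opp l) = vopp (lsem env l).
Proof.
  revert env; induction l as [|a l IH]; intros env; simpl. now rewrite vopp0.
  now rewrite IH, zmul_opp, vopp_add.
Qed.

Lemma lsem_atom env n : lsem env (atoml n) = nth n env vzero.
Proof.
  revert env; induction n; intros env; simpl.
  - rewrite zmul1, vadd0. destruct env; reflexivity.
  - rewrite zmul0, vadd0l, IHn. destruct env; simpl; auto. destruct n; reflexivity.
Qed.

Lemma anorm_ok env e : aeval env e = lsem env (anorm e).
Proof.
  induction e; simpl.
  - now rewrite lsem_atom.
  - reflexivity.
  - now rewrite lsem_add, IHe1, IHe2.
  - now rewrite lsem_opp, IHe.
Qed.

Lemma lsem_zero env l : forallb (Z.eqb 0) l = true -> lsem env l = vzero.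
Proof.
  revert env; induction l as [|a l IH]; intros env H; simpl in *. reflexivity.
  apply andb_prop in H as [H1 H2].
  assert (a = 0%Z) by (destruct a; simpl in H1; congruence). subst a.
  rewrite zmul0, IH by auto. apply vadd0.
Qed.

Lemma abel_sound env e1 e2 :
  forallb (Z.eqb 0) (anorm (AAdd e1 (AOpp e2))) = true -> aeval env e1 = aeval env e2.
Proof.
  intros H. apply (lsem_zero env) in H. rewrite <- anorm_ok in H. simpl in H.
  apply vsub_eq0. exact H.
Qed.

End AddGroup.

(* [abel] proves equalities between sums and opposites of arbitrary terms of X
   (an identity of abelian groups) by reflection: both sides are reified over a
   common list of atoms and the difference is normalized by computation. *)
Ltac lookup t l :=
  lazymatch l with
  | nil => constr:(@None nat)
  | t :: _ => constr:(Some 0%nat)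
  | _ :: ?l' => let r := lookup t l' in
      lazymatch r with Some ?n => constr:(Some (S n)) | None => constr:(@None nat) end
  end.

Ltac collect t l :=
  lazymatch t with
  | vadd ?a ?b => let l1 := collect a l in collect b l1
  | vopp ?a => collect a l
  | vzero => l
  | _ => let r := lookup t l in
         lazymatch r with None => constr:(t :: l) | _ => l end
  end.

Ltac reify env t :=
  lazymatch t with
  | vadd ?a ?b => let x := reify env a in let y := reify env b in constr:(AAdd x y)
  | vopp ?a => let x := reify env a in constr:(AOpp x)
  | vzero => constr:(A0)
  | _ => let r := lookup t env in
         lazymatch r with Some ?n => constr:(AAt n) end
  end.

Ltac abel :=
  lazymatch goal with
  | |- @eq ?T ?l ?r =>
      let e0 := collect l (@nil T) in
      let env := collect r e0 in
      let el := reify env l in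
      let er := reify env r in
      change (aeval env el = aeval env er);
      apply abel_sound; vm_compute; reflexivity
  end.

Section Operators.
Context {X : CBanach}.

Lemma Cmod_real t : Cmod (mkCx t 0) = Rabs t.
Proof. unfold Cmod; simpl. rewrite <- sqrt_Rsqr_abs. f_equal. unfold Rsqr; ring. Qed.

Lemma vscal0l (x : X) : vscal (mkCx 0 0) x = vzero.
Proof.
  assert (E : Cadd (mkCx 0 0) (mkCx 0 0) = mkCx 0 0) by (unfold Cadd; simpl; f_equal; ring).
  pose proof (vscalDl (mkCx 0 0) (mkCx 0 0) x) as H. rewrite E in H.
  symmetry. apply (vadd_cancel (vscal (mkCx 0 0) x)). rewrite vadd0. exact H.
Qed.

Lemma vscal_zero c : vscal c (@vzero X) = vzero.
Proof.
  symmetry. apply (vadd_cancel (vscal c vzero)). rewrite <- vscalDr, !vadd0. reflexivity.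
Qed.

Lemma vscal_opp c (x : X) : vscal c (vopp x) = vopp (vscal c x).
Proof. apply vopp_unique. rewrite <- vscalDr, vaddN. apply vscal_zero. Qed.

Lemma vnorm0 : vnorm (@vzero X) = 0.
Proof. rewrite <- (vscal0l vzero), vnorm_scal, Cmod_real, Rabs_R0. ring. Qed.

(* The opposite is scaling by -1, hence has the same norm. *)
Lemma vnorm_opp (x : X) : vnorm (vopp x) = vnorm x.
Proof.
  assert (E : vscal (mkCx (-1) 0) x = vopp x).
  { apply vopp_unique. rewrite <- (vscal1 x) at 1. unfold Cone.
    rewrite <- vscalDl. unfold Cadd; simpl.
    replace (1 + -1) with 0 by ring. replace (0 + 0) with 0 by ring. apply vscal0l. }
  rewrite <- E, vnorm_scal, Cmod_real, Rabs_left by lra. ring.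
Qed.

Lemma vnorm_sub_sym (x y : X) : vnorm (vadd x (vopp y)) = vnorm (vadd y (vopp x)).
Proof. rewrite <- vnorm_opp. f_equal. rewrite vopp_add, vopp_opp. apply vaddC. Qed.

Lemma vnorm_sub_le (x y : X) : vnorm (vadd x (vopp y)) <= vnorm x + vnorm y.
Proof. rewrite <- (vnorm_opp y). apply vnorm_triangle. Qed.

Lemma bl_add (f : X -> X) : bounded_linear f -> forall x y, f (vadd x y) = vadd (f x) (f y).
Proof. intros [H _]; exact H. Qed.

Lemma bl_scal (f : X -> X) : bounded_linear f -> forall c x, f (vscal c x) = vscal c (f x).
Proof. intros [_ [H _]]; exact H. Qed.

Lemma bl_zero (f : X -> X) : bounded_linear f -> f vzero = vzero.
Proof.
  intros H. symmetry. apply (vadd_cancel (f vzero)).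
  rewrite <- bl_add by exact H. rewrite !vadd0. reflexivity.
Qed.

Lemma bl_opp (f : X -> X) : bounded_linear f -> forall x, f (vopp x) = vopp (f x).
Proof. intros H x. apply vopp_unique. rewrite <- bl_add, vaddN by exact H. apply bl_zero, H. Qed.

Lemma bl_bnd (f : X -> X) :
  bounded_linear f -> exists M, 0 <= M /\ forall v, vnorm (f v) <= M * vnorm v.
Proof.
  intros [_ [_ [M HM]]]. exists (Rabs M). split. apply Rabs_pos.
  intros v. eapply Rle_trans. apply HM. apply Rmult_le_compat_r. apply vnorm_ge0. apply RRle_abs.
Qed.

Lemma BL_mul (f g : X -> X) :
  bounded_linear f -> bounded_linear g -> bounded_linear (opmul f g).
Proof.
  intros Hf Hg. unfold opmul. split; [|split].
  - intros x y. rewrite (bl_add g Hg), (bl_add f Hf). reflexivity.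
  - intros c x. rewrite (bl_scal g Hg), (bl_scal f Hf). reflexivity.
  - destruct (bl_bnd f Hf) as [M [HM0 HM]]. destruct (bl_bnd g Hg) as [N [HN0 HN]].
    exists (M * N). intros x. eapply Rle_trans. apply HM. rewrite Rmult_assoc.
    apply Rmult_le_compat_l; auto.
Qed.

Lemma BL_add (f g : X -> X) :
  bounded_linear f -> bounded_linear g -> bounded_linear (opadd f g).
Proof.
  intros Hf Hg. unfold opadd. split; [|split].
  - intros x y. rewrite (bl_add g Hg), (bl_add f Hf). abel.
  - intros c x. rewrite (bl_scal g Hg), (bl_scal f Hf), vscalDr. reflexivity.
  - destruct (bl_bnd f Hf) as [M [HM0 HM]]. destruct (bl_bnd g Hg) as [N [HN0 HN]].
    exists (M + N). intros x. eapply Rle_trans. apply vnorm_triangle.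
    specialize (HM x); specialize (HN x). lra.
Qed.

Lemma BL_sub (f g : X -> X) :
  bounded_linear f -> bounded_linear g -> bounded_linear (opsub f g).
Proof.
  intros Hf Hg. unfold opsub. split; [|split].
  - intros x y. rewrite (bl_add g Hg), (bl_add f Hf), vopp_add. abel.
  - intros c x. rewrite (bl_scal g Hg), (bl_scal f Hf), vscalDr, vscal_opp. reflexivity.
  - destruct (bl_bnd f Hf) as [M [HM0 HM]]. destruct (bl_bnd g Hg) as [N [HN0 HN]].
    exists (M + N). intros x. eapply Rle_trans. apply vnorm_sub_le.
    specialize (HM x); specialize (HN x). lra.
Qed.

Lemma BL_id : bounded_linear (fun v : X => v).
Proof. split; [|split]; auto. exists 1. intros; lra. Qed.

Lemma BL_zero : bounded_linear (@opzero X).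
Proof.
  unfold opzero. split; [|split].
  - intros; rewrite vadd0; auto.
  - intros; rewrite vscal_zero; auto.
  - exists 0. intros. rewrite vnorm0. lra.
Qed.

Lemma BL_pow (f : X -> X) n : bounded_linear f -> bounded_linear (oppow f n).
Proof. intros H. induction n; simpl. apply BL_id. apply BL_mul; auto. Qed.

Lemma oppow_S_r (f : X -> X) n v : oppow f (S n) v = oppow f n (f v).
Proof. induction n; simpl in *; auto. unfold opmul in *. now rewrite IHn. Qed.

Lemma oppow_add (f : X -> X) n m v : oppow f (n + m) v = oppow f n (oppow f m v).
Proof. induction n; simpl; auto. unfold opmul. now rewrite IHn. Qed.

Lemma oppow_bound (f : X -> X) M : 0 <= M -> (forall v, vnorm (f v) <= M * vnorm v) ->
  forall n v, vnorm (oppow f n v) <= M ^ n * vnorm v.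
Proof.
  intros HM Hf n. induction n; intros v; simpl. lra.
  unfold opmul. eapply Rle_trans. apply Hf. rewrite Rmult_assoc.
  apply Rmult_le_compat_l; auto.
Qed.

End Operators.

(* [opext] turns an operator identity into a pointwise one; [pushlin] pushes
   the hypothesised bounded linear operators through sums and opposites; [bl]
   proves that a polynomial expression in bounded operators is bounded. *)
Ltac opext := let v := fresh "v" in apply functional_extensionality; intro v;
  unfold opmul, opadd, opsub, opzero.

Ltac pushlin := repeat match goal with
 | H : bounded_linear ?f |- context [?f (vadd ?x ?y)] => rewrite (bl_add f H x y)
 | H : bounded_linear ?f |- context [?f (vopp ?x)] => rewrite (bl_opp f H x)
 | H : bounded_linear ?f |- context [?f vzero] => rewrite (bl_zero f H)
 end.

Ltac bl := repeat match goal with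
 | |- bounded_linear (opadd _ _) => apply BL_add
 | |- bounded_linear (opsub _ _) => apply BL_sub
 | |- bounded_linear (opmul _ _) => apply BL_mul
 | |- bounded_linear (oppow _ _) => apply BL_pow
 | |- bounded_linear opzero => apply BL_zero
 | |- bounded_linear (fun v => v) => apply BL_id
 | H : bounded_linear ?f |- bounded_linear ?f => exact H
 end.

Lemma Rdiv_ge0 (a b : R) : 0 <= a -> 0 < b -> 0 <= a / b.
Proof. intros. unfold Rdiv. apply Rmult_le_pos; auto. left; apply Rinv_0_lt_compat; auto. Qed.

Lemma le_half_pow (a K : R) : 0 <= K -> (forall n, a <= K * (/2) ^ n) -> a <= 0.
Proof.
  intros HK H. apply Rnot_lt_le. intros Ha.
  destruct (pow_lt_1_zero (/2) ltac:(rewrite Rabs_pos_eq; lra) (a / (K + 1))) as [N HN].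
  { apply Rdiv_lt_0_compat; lra. }
  specialize (HN N (le_n _)). specialize (H N).
  rewrite Rabs_pos_eq in HN by (apply pow_le; lra).
  apply (Rmult_lt_compat_l (K + 1)) in HN; [|lra].
  replace ((K + 1) * (a / (K + 1))) with a in HN by (field; lra).
  assert (0 <= (/2) ^ N) by (apply pow_le; lra). nra.
Qed.

(* (n + 1) (d/2)^n <= d^n, used to absorb the linear factor in [QN_sum]. *)
Lemma half_pow_bound d n : 0 < d -> INR (S n) * (d / 2) ^ n <= d ^ n.
Proof.
  intros Hd.
  assert (two_pow : INR (S n) <= 2 ^ n).
  { clear Hd. induction n. simpl; lra. rewrite S_INR. change (2 ^ S n) with (2 * 2 ^ n).
    assert (1 <= 2 ^ n) by (apply pow_R1_Rle; lra). lra. }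
  unfold Rdiv. rewrite Rpow_mult_distr.
  assert (0 < d ^ n) by (apply pow_lt; lra).
  assert (0 < (/2) ^ n) by (apply pow_lt; lra).
  assert (2 ^ n * (/2) ^ n = 1)
    by (rewrite <- Rpow_mult_distr; replace (2 * /2) with 1 by field; apply pow1).
  assert (INR (S n) * (/2) ^ n <= 1) by (rewrite <- H1; apply Rmult_le_compat_r; lra).
  replace (INR (S n) * (d ^ n * (/ 2) ^ n)) with (d ^ n * (INR (S n) * (/2) ^ n)) by ring.
  rewrite <- (Rmult_1_r (d ^ n)) at 2. apply Rmult_le_compat_l; lra.
Qed.

Lemma bound_finite (g : nat -> R) N : exists C, forall n, (n < N)%nat -> g n <= C.
Proof.
  induction N. exists 0. intros; lia.
  destruct IHN as [C HC]. exists (Rmax C (g N)). intros n Hn.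
  destruct (Nat.eq_dec n N) as [->|h]. apply Rmax_r.
  eapply Rle_trans. apply HC; lia. apply Rmax_l.
Qed.

(** * Limits and operator series *)

Section Series.
Context {X : CBanach}.

Definition cv (u : nat -> X) (l : X) : Prop :=
  forall eps, 0 < eps -> exists N, forall n, (N <= n)%nat -> vnorm (vadd (u n) (vopp l)) < eps.

(* The limit of a sequence (chosen classically; irrelevant if it diverges). *)
Definition limX (u : nat -> X) : X :=
  match excluded_middle_informative (exists l, cv u l) with
  | left H => proj1_sig (constructive_indefinite_description _ H)
  | right _ => vzero
  end.

Lemma cv_unique u l l' : cv u l -> cv u l' -> l = l'.
Proof.
  intros H1 H2. apply eq_sym, vsub_eq0, vnorm_eq0, Rle_antisym; [|apply vnorm_ge0].
  apply Rnot_lt_le. intros Hpos.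
  set (eps := vnorm (vadd l' (vopp l))) in *.
  destruct (H1 (eps/2)) as [N1 HN1]. lra. destruct (H2 (eps/2)) as [N2 HN2]. lra.
  specialize (HN1 (N1 + N2)%nat ltac:(lia)). specialize (HN2 (N1 + N2)%nat ltac:(lia)).
  rewrite vnorm_sub_sym in HN2.
  assert (E : vadd l' (vopp l) =
    vadd (vadd l' (vopp (u (N1+N2)%nat))) (vadd (u (N1+N2)%nat) (vopp l))) by abel.
  pose proof (vnorm_triangle (vadd l' (vopp (u (N1+N2)%nat))) (vadd (u (N1+N2)%nat) (vopp l))).
  unfold eps in *. rewrite <- E in H. lra.
Qed.

Lemma limX_spec u l : cv u l -> limX u = l.
Proof.
  intros H. unfold limX. destruct excluded_middle_informative as [H'|H'].
  - destruct constructive_indefinite_description as [l' Hl']. simpl. eapply cv_unique; eauto.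
  - exfalso; eauto.
Qed.

Lemma cv_const (c : X) : cv (fun _ => c) c.
Proof. intros eps H. exists O. intros. rewrite vaddN, vnorm0. auto. Qed.

Lemma cv_add u l u' l' : cv u l -> cv u' l' -> cv (fun n => vadd (u n) (u' n)) (vadd l l').
Proof.
  intros H1 H2 eps Heps.
  destruct (H1 (eps/2)) as [N1 HN1]. lra. destruct (H2 (eps/2)) as [N2 HN2]. lra.
  exists (N1 + N2)%nat. intros n Hn. specialize (HN1 n ltac:(lia)). specialize (HN2 n ltac:(lia)).
  assert (vadd (vadd (u n) (u' n)) (vopp (vadd l l')) =
          vadd (vadd (u n) (vopp l)) (vadd (u' n) (vopp l'))) as -> by (rewrite vopp_add; abel).
  eapply Rle_lt_trans. apply vnorm_triangle. lra.
Qed.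

Lemma cv_map (A : X -> X) u l : bounded_linear A -> cv u l -> cv (fun n => A (u n)) (A l).
Proof.
  intros HA H eps Heps. destruct (bl_bnd A HA) as [M [HM0 HM]].
  destruct (H (eps / (M + 1))) as [N HN]. apply Rdiv_lt_0_compat; lra.
  exists N. intros n Hn. specialize (HN n Hn).
  rewrite <- (bl_opp A HA), <- (bl_add A HA). eapply Rle_lt_trans. apply HM.
  assert (eps / (M+1) * (M+1) = eps) by (field; lra).
  pose proof (vnorm_ge0 (vadd (u n) (vopp l))). nra.
Qed.

Lemma cv_scal c u l : cv u l -> cv (fun n => vscal c (u n)) (vscal c l).
Proof.
  intros H eps Heps. assert (0 <= Cmod c) by apply sqrt_pos.
  destruct (H (eps / (Cmod c + 1))) as [N HN]. apply Rdiv_lt_0_compat; lra.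
  exists N. intros n Hn. specialize (HN n Hn).
  rewrite <- vscal_opp, <- vscalDr, vnorm_scal.
  assert (eps / (Cmod c+1) * (Cmod c+1) = eps) by (field; lra).
  pose proof (vnorm_ge0 (vadd (u n) (vopp l))). nra.
Qed.

Lemma cv_shift u l : cv u l -> cv (fun n => u (S n)) l.
Proof. intros H eps Heps. destruct (H eps Heps) as [N HN]. exists N. intros; apply HN; lia. Qed.

Lemma cv_bound u l B : (forall n, vnorm (u n) <= B) -> cv u l -> vnorm l <= B.
Proof.
  intros Hb H. apply Rnot_lt_le. intros Hl.
  destruct (H (vnorm l - B)) as [N HN]. lra. specialize (HN N (le_n _)). specialize (Hb N).
  rewrite vnorm_sub_sym in HN.
  pose proof (vnorm_triangle (vadd l (vopp (u N))) (u N)).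
  assert (vadd (vadd l (vopp (u N))) (u N) = l) as E by abel. rewrite E in H0. lra.
Qed.

Fixpoint psum (T : nat -> X -> X) (v : X) (N : nat) : X :=
  match N with O => vzero | S N => vadd (psum T v N) (T N v) end.

Definition series (T : nat -> X -> X) : X -> X := fun v => limX (psum T v).

Definition GB (T : nat -> X -> X) : Prop :=
  exists K r, 0 <= K /\ 0 <= r < 1 /\ forall n v, vnorm (T n v) <= K * r ^ n * vnorm v.

Lemma psum_tail T K r v : 0 <= K -> 0 <= r < 1 ->
  (forall n v, vnorm (T n v) <= K * r ^ n * vnorm v) ->
  forall n k, (1 - r) * vnorm (vadd (psum T v (n + k)) (vopp (psum T v n)))
              <= K * vnorm v * r ^ n * (1 - r ^ k).
Proof.
  intros HK Hr HT n k. induction k.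
  - rewrite Nat.add_0_r, vaddN, vnorm0. simpl. lra.
  - rewrite Nat.add_succ_r. simpl.
    set (d := vadd (psum T v (n + k)) (vopp (psum T v n))) in *.
    assert (vadd (vadd (psum T v (n + k)) (T (n + k)%nat v)) (vopp (psum T v n)) =
            vadd d (T (n + k)%nat v)) as -> by (unfold d; abel).
    pose proof (vnorm_triangle d (T (n + k)%nat v)).
    pose proof (HT (n+k)%nat v). rewrite pow_add in H0.
    assert (0 <= r ^ n) by (apply pow_le; lra). assert (0 <= r ^ k) by (apply pow_le; lra).
    pose proof (vnorm_ge0 v).
    assert (0 <= K * r ^ n * r ^ k * vnorm v) by (repeat apply Rmult_le_pos; auto).
    apply Rle_trans with ((1 - r) * (vnorm d + vnorm (T (n + k)%nat v))).
    apply Rmult_le_compat_l; lra.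
    nra.
Qed.

Lemma psum_cauchy T v : GB T -> forall eps, 0 < eps -> exists N, forall m n,
  (N <= m)%nat -> (N <= n)%nat -> vnorm (vadd (psum T v m) (vopp (psum T v n))) < eps.
Proof.
  intros [K [r [HK [Hr HT]]]] eps Heps. set (V := vnorm v). assert (0 <= V) by apply vnorm_ge0.
  destruct (pow_lt_1_zero r ltac:(rewrite Rabs_pos_eq; lra) (eps * (1 - r) / (K * V + 1)))
    as [N HN].
  { apply Rdiv_lt_0_compat; nra. }
  exists N.
  assert (main : forall n k, (N <= n)%nat ->
            vnorm (vadd (psum T v (n + k)) (vopp (psum T v n))) < eps).
  { intros n k Hn. pose proof (psum_tail T K r v HK Hr HT n k). specialize (HN n Hn).
    rewrite Rabs_pos_eq in HN by (apply pow_le; lra).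
    assert (0 <= r ^ k <= 1).
    { split. apply pow_le; lra. rewrite <- (pow1 k). apply pow_incr. lra. }
    assert (0 <= r ^ n) by (apply pow_le; lra).
    assert (K * V * r ^ n <= K * V * (eps * (1 - r) / (K * V + 1)))
      by (apply Rmult_le_compat_l; nra).
    assert (K * V * (eps * (1 - r) / (K * V + 1)) < eps * (1 - r)).
    { apply Rlt_le_trans with ((K * V + 1) * (eps * (1 - r) / (K * V + 1))).
      apply Rmult_lt_compat_r. apply Rdiv_lt_0_compat; nra. lra. right; field. nra. }
    fold V in H. assert (0 <= K * V * r ^ n) by (repeat apply Rmult_le_pos; lra).
    assert (K * V * r ^ n * (1 - r ^ k) <= K * V * r ^ n) by nra.
    apply (Rmult_lt_reg_l (1 - r)); unfold V in *; lra. }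
  intros m n Hm Hn. destruct (Nat.le_ge_cases n m) as [h|h].
  - replace m with (n + (m - n))%nat by lia. apply main; auto.
  - rewrite vnorm_sub_sym. replace n with (m + (n - m))%nat by lia. apply main; auto.
Qed.

Lemma series_cv T v : GB T -> cv (psum T v) (series T v).
Proof.
  intros HT. destruct (vcomplete (psum T v) (psum_cauchy T v HT)) as [l Hl].
  unfold series. rewrite (limX_spec _ l Hl). exact Hl.
Qed.

Lemma series_compl (A : X -> X) T v : GB T -> bounded_linear A ->
  A (series T v) = series (fun n => opmul A (T n)) v.
Proof.
  intros HT HA. unfold series at 2. symmetry. apply limX_spec.
  assert (E : psum (fun n => opmul A (T n)) v = fun N => A (psum T v N)).
  { apply functional_extensionality; intro N. induction N; simpl.
    - now rewrite (bl_zero A HA).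
    - rewrite IHN, (bl_add A HA). reflexivity. }
  rewrite E. apply cv_map; auto. apply series_cv; auto.
Qed.

Lemma series_compr (B : X -> X) T v : series T (B v) = series (fun n => opmul (T n) B) v.
Proof.
  unfold series. f_equal. apply functional_extensionality; intro N.
  induction N; simpl; auto. rewrite IHN. reflexivity.
Qed.

Lemma series_shift T v : GB T -> series T v = vadd (T O v) (series (fun n => T (S n)) v).
Proof.
  intros HT.
  assert (E : forall N, psum (fun n => T (S n)) v N = vadd (psum T v (S N)) (vopp (T O v))).
  { induction N; simpl in *. abel. rewrite IHN. abel. }
  assert (H : cv (psum (fun n => T (S n)) v) (vadd (series T v) (vopp (T O v)))).
  { replace (psum (fun n => T (S n)) v) with (fun N => vadd (psum T v (S N)) (vopp (T O v)))
      by (apply functional_extensionality; intro; symmetry; apply E).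
    apply cv_add. apply cv_shift, series_cv, HT. apply cv_const. }
  unfold series at 2. rewrite (limX_spec _ _ H). abel.
Qed.

Lemma series_zero T v : (forall n w, T n w = vzero) -> series T v = vzero.
Proof.
  intros H. unfold series. apply limX_spec.
  replace (psum T v) with (fun _ : nat => @vzero X). apply cv_const.
  apply functional_extensionality; intro N; induction N; simpl; auto. rewrite <- IHN, H. abel.
Qed.

Lemma series_BL T : GB T -> (forall n, bounded_linear (T n)) -> bounded_linear (series T).
Proof.
  intros HT HL. split; [|split].
  - intros v w. unfold series at 1. apply limX_spec.
    replace (psum T (vadd v w)) with (fun N => vadd (psum T v N) (psum T w N)).
    apply cv_add; apply series_cv; auto.
    apply functional_extensionality; intro N; induction N; simpl. abel.
    rewrite <- IHN, (bl_add _ (HL N)). abel.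
  - intros c v. unfold series at 1. apply limX_spec.
    replace (psum T (vscal c v)) with (fun N => vscal c (psum T v N)).
    apply cv_scal; apply series_cv; auto.
    apply functional_extensionality; intro N; induction N; simpl. apply vscal_zero.
    rewrite <- IHN, (bl_scal _ (HL N)), vscalDr. reflexivity.
  - destruct HT as [K [r [HK [Hr HTb]]]]. exists (K / (1 - r)). intros v.
    apply (cv_bound (psum T v)). 2: apply series_cv; exists K, r; auto.
    intros N. pose proof (psum_tail T K r v HK Hr HTb O N). simpl in H.
    rewrite vopp0, vadd0 in H.
    assert (0 <= r ^ N) by (apply pow_le; lra). pose proof (vnorm_ge0 v).
    assert (0 <= K * vnorm v * r ^ N) by (repeat apply Rmult_le_pos; lra).
    apply (Rmult_le_reg_l (1 - r)). lra.
    replace ((1 - r) * (K / (1 - r) * vnorm v)) with (K * vnorm v) by (field; lra). lra.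
Qed.

Lemma GB_compl (A : X -> X) T : GB T -> bounded_linear A -> GB (fun n => opmul A (T n)).
Proof.
  intros [K [r [HK [Hr HT]]]] HA. destruct (bl_bnd A HA) as [M [HM0 HM]].
  exists (M * K), r. repeat split; try lra. apply Rmult_le_pos; auto.
  intros n v. unfold opmul. eapply Rle_trans. apply HM.
  replace (M * K * r ^ n * vnorm v) with (M * (K * r ^ n * vnorm v)) by ring.
  apply Rmult_le_compat_l; auto.
Qed.

Lemma GB_compr (B : X -> X) T : GB T -> bounded_linear B -> GB (fun n => opmul (T n) B).
Proof.
  intros [K [r [HK [Hr HT]]]] HB. destruct (bl_bnd B HB) as [M [HM0 HM]].
  exists (K * M), r. repeat split; try lra. apply Rmult_le_pos; auto.
  intros n v. unfold opmul. eapply Rle_trans. apply HT.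
  assert (0 <= K * r ^ n) by (apply Rmult_le_pos; auto; apply pow_le; lra).
  replace (K * M * r ^ n * vnorm v) with ((K * r ^ n) * (M * vnorm v)) by ring.
  apply Rmult_le_compat_l; auto.
Qed.

End Series.

(** * Quasinilpotence *)

Section Quasinilpotent.
Context {X : CBanach}.

(* Working form of quasinilpotence: for every eps > 0 the powers satisfy
   |f^n v| <= C eps^n |v| uniformly in n. *)
Definition QN (f : X -> X) : Prop :=
  forall eps, 0 < eps -> exists C, forall n v, vnorm (oppow f n v) <= C * eps ^ n * vnorm v.

Lemma QN_absC (f : X -> X) : QN f -> forall eps, 0 < eps ->
  exists C, 0 <= C /\ forall n v, vnorm (oppow f n v) <= C * eps ^ n * vnorm v.
Proof.
  intros H eps He. destruct (H eps He) as [C HC]. exists (Rabs C). split. apply Rabs_pos.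
  intros n v. eapply Rle_trans. apply HC. rewrite !Rmult_assoc. apply Rmult_le_compat_r.
  apply Rmult_le_pos. apply pow_le; lra. apply vnorm_ge0. apply RRle_abs.
Qed.

Lemma QN_of_eventual (f : X -> X) : bounded_linear f ->
  (forall eps, 0 < eps -> exists N C, forall n v, (N <= n)%nat ->
     vnorm (oppow f n v) <= C * eps ^ n * vnorm v) ->
  QN f.
Proof.
  intros Hf H eps Heps. destruct (bl_bnd f Hf) as [M [HM0 HM]].
  destruct (H eps Heps) as [N [C HC]].
  destruct (bound_finite (fun n => M ^ n / eps ^ n) N) as [C0 HC0].
  exists (Rabs C + Rabs C0). intros n v.
  assert (0 < eps ^ n) by (apply pow_lt; lra). pose proof (vnorm_ge0 v).
  assert (0 <= eps ^ n * vnorm v) by (apply Rmult_le_pos; lra).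
  pose proof (Rabs_pos C). pose proof (Rabs_pos C0).
  destruct (Nat.le_gt_cases N n) as [h|h].
  - eapply Rle_trans. apply HC; auto. pose proof (RRle_abs C). nra.
  - eapply Rle_trans. apply (oppow_bound f M HM0 HM).
    specialize (HC0 n h). pose proof (RRle_abs C0) as hc.
    assert (EM : M ^ n * vnorm v = (M ^ n / eps ^ n) * (eps ^ n * vnorm v)) by (field; lra).
    rewrite EM.
    replace ((Rabs C + Rabs C0) * eps ^ n * vnorm v)
      with ((Rabs C + Rabs C0) * (eps ^ n * vnorm v)) by ring.
    apply Rmult_le_compat_r; auto. lra.
Qed.

Lemma QN_nil (f : X -> X) k : bounded_linear f -> (forall v, oppow f k v = vzero) -> QN f.
Proof.
  intros Hf Hk. apply QN_of_eventual; auto. intros eps Heps. exists k, 0. intros n v Hn.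
  replace n with ((n - k) + k)%nat by lia. rewrite oppow_add, Hk, bl_zero by (apply BL_pow; auto).
  rewrite vnorm0. lra.
Qed.

Lemma QN_beats_growth (q : X -> X) M : 0 <= M -> QN q ->
  exists e C, 0 < e /\ 0 <= C /\ (forall n, 0 <= M ^ n * e ^ n <= (/2) ^ n) /\
    forall n v, vnorm (oppow q n v) <= C * e ^ n * vnorm v.
Proof.
  intros HM Hq. set (e := / (2 * (M + 1))).
  assert (He : 0 < e) by (apply Rinv_0_lt_compat; lra).
  assert (Me : M * e <= /2).
  { unfold e. rewrite Rinv_mult. apply (Rmult_le_reg_l 2). lra.
    replace (2 * (M * (/ 2 * / (M + 1)))) with (M / (M + 1)) by (field; lra).
    replace (2 * / 2) with 1 by field. apply (Rmult_le_reg_l (M + 1)). lra.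
    replace ((M + 1) * (M / (M + 1))) with M by (field; lra). lra. }
  destruct (QN_absC q Hq e He) as [C [HC0 HC]].
  exists e, C. split; [exact He|split; [exact HC0|split; [|exact HC]]].
  intros n. rewrite <- Rpow_mult_distr. split. apply pow_le; nra.
  apply pow_incr. split; nra.
Qed.

Lemma oppow_sq (g : X -> X) n v : oppow (opmul g g) n v = oppow g (n + n) v.
Proof. induction n; simpl; auto. rewrite Nat.add_succ_r. simpl. unfold opmul in *. now rewrite IHn. Qed.

Lemma QN_sq (g : X -> X) : QN g -> QN (opmul g g).
Proof.
  intros H eps He. destruct (H (sqrt eps)) as [C HC]. apply sqrt_lt_R0; auto.
  exists C. intros n v. rewrite oppow_sq. eapply Rle_trans. apply HC.
  rewrite pow_add, <- Rpow_mult_distr, sqrt_sqrt by lra. right; reflexivity.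
Qed.

Lemma QN_of_sq (g : X -> X) : bounded_linear g -> QN (opmul g g) -> QN g.
Proof.
  intros Hg H eps He. destruct (QN_absC _ H (eps * eps)) as [C [HC0 HC]]. nra.
  destruct (bl_bnd g Hg) as [M [HM0 HM]].
  exists (C + C * M / eps). intros n v.
  assert (0 <= C * M / eps) by (apply Rdiv_ge0; nra).
  pose proof (vnorm_ge0 v).
  destruct (Nat.Even_or_Odd n) as [[k ->]|[k ->]].
  - replace (2 * k)%nat with (k + k)%nat by lia. rewrite <- oppow_sq.
    eapply Rle_trans. apply HC. rewrite pow_add, <- Rpow_mult_distr.
    assert (0 <= (eps * eps) ^ k * vnorm v) by (apply Rmult_le_pos; auto; apply pow_le; nra).
    rewrite !Rmult_assoc. apply Rmult_le_compat_r; lra.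
  - replace (2 * k + 1)%nat with (S (k + k)) by lia. rewrite oppow_S_r, <- oppow_sq.
    eapply Rle_trans. apply HC.
    assert (0 <= C * (eps * eps) ^ k) by (apply Rmult_le_pos; auto; apply pow_le; nra).
    eapply Rle_trans. apply Rmult_le_compat_l. auto. apply HM.
    simpl. rewrite pow_add, <- Rpow_mult_distr.
    assert (0 <= (eps * eps) ^ k) by (apply pow_le; nra).
    assert (E : C * (eps * eps) ^ k * (M * vnorm v)
                = (C * M / eps) * ((eps * eps) ^ k * (eps * vnorm v))) by (field; lra).
    rewrite E. apply Rle_trans with ((C + C * M / eps) * ((eps * eps) ^ k * (eps * vnorm v))).
    apply Rmult_le_compat_r. apply Rmult_le_pos; nra. lra. right; ring.
Qed.

Lemma oppow_comm (f g : X -> X) n v : oppow (opmul f g) (S n) v = f (oppow (opmul g f) n (g v)).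
Proof. induction n; simpl in *; auto. unfold opmul in *. now rewrite IHn. Qed.

(* gf quasinilpotent implies fg quasinilpotent, since (fg)^(n+1) = f (gf)^n g. *)
Lemma QN_comm (f g : X -> X) : bounded_linear f -> bounded_linear g ->
  QN (opmul g f) -> QN (opmul f g).
Proof.
  intros Hf Hg H eps He. destruct (QN_absC _ H eps He) as [C [HC0 HC]].
  destruct (bl_bnd f Hf) as [Mf [Hf0 HMf]]. destruct (bl_bnd g Hg) as [Mg [Hg0 HMg]].
  exists (1 + C * Mf * Mg / eps). intros n v.
  assert (0 <= C * Mf * Mg / eps)
    by (apply Rdiv_ge0; try lra; repeat apply Rmult_le_pos; auto).
  pose proof (vnorm_ge0 v).
  destruct n.
  - simpl. nra.
  - rewrite oppow_comm. eapply Rle_trans. apply HMf.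
    eapply Rle_trans. apply Rmult_le_compat_l. auto. apply HC.
    assert (0 <= eps ^ n) by (apply pow_le; lra).
    assert (0 <= C * eps ^ n) by (apply Rmult_le_pos; auto).
    eapply Rle_trans. apply Rmult_le_compat_l. auto. apply Rmult_le_compat_l. auto. apply HMg.
    assert (E : Mf * (C * eps ^ n * (Mg * vnorm v))
                = (C * Mf * Mg / eps) * (eps ^ n * eps * vnorm v)) by (field; lra).
    rewrite E. apply Rle_trans with ((1 + C * Mf * Mg / eps) * (eps ^ n * eps * vnorm v)).
    apply Rmult_le_compat_r. repeat apply Rmult_le_pos; lra. lra. right; simpl; ring.
Qed.

Lemma oppow_add_orth (s t : X -> X) : (forall v, s (t v) = vzero) ->
  forall n w, oppow (opadd s t) n (t w) = oppow t (S n) w.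
Proof.
  intros Hst. induction n; intros w; simpl; auto. unfold opmul, opadd in *.
  rewrite IHn. simpl. unfold opmul. rewrite Hst. abel.
Qed.

(* The growth estimate behind [QN_sum]: expanding (s + t)^n s^m with st = 0
   produces n + 1 terms t^k s^(n+m-k), each bounded by C^2 eps^(n+m). *)
Lemma oppow_orth_sum_bound (s t : X -> X) C eps :
  bounded_linear s -> bounded_linear t -> (forall v, s (t v) = vzero) -> 1 <= C -> 0 < eps ->
  (forall k v, vnorm (oppow s k v) <= C * eps ^ k * vnorm v) ->
  (forall k v, vnorm (oppow t k v) <= C * eps ^ k * vnorm v) ->
  forall n m v, vnorm (oppow (opadd s t) n (oppow s m v))
                <= INR (S n) * (C * C) * eps ^ (n + m) * vnorm v.
Proof.
  intros Hs Ht Hst HC1 He Bs Bt. assert (Hg : bounded_linear (opadd s t)) by bl.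
  induction n; intros m v.
  - simpl. eapply Rle_trans. apply Bs. pose proof (vnorm_ge0 v).
    assert (0 <= eps ^ m) by (apply pow_le; lra).
    assert (0 <= eps ^ m * vnorm v) by (apply Rmult_le_pos; lra).
    apply Rle_trans with (C * C * (eps ^ m * vnorm v)).
    + replace (C * eps ^ m * vnorm v) with (C * (eps ^ m * vnorm v)) by ring.
      apply Rmult_le_compat_r; nra.
    + right; ring.
  - rewrite oppow_S_r. unfold opadd at 2. rewrite (bl_add _ (BL_pow _ n Hg)).
    eapply Rle_trans. apply vnorm_triangle.
    pose proof (IHn (S m) v) as H1. simpl oppow at 1 in H1. unfold opmul in H1.
    rewrite oppow_add_orth by exact Hst.
    pose proof (Bt (S n) (oppow s m v)) as H2. pose proof (Bs m v) as H3.
    assert (0 <= eps ^ (S n)) by (apply pow_le; lra).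
    assert (0 <= C * eps ^ (S n)) by (apply Rmult_le_pos; lra).
    assert (vnorm (oppow t (S n) (oppow s m v)) <= C * eps ^ S n * (C * eps ^ m * vnorm v))
      by (eapply Rle_trans; [apply H2|apply Rmult_le_compat_l; auto]).
    replace (n + S m)%nat with (S n + m)%nat in H1 by lia.
    rewrite pow_add in *. rewrite S_INR. nra.
Qed.

Lemma QN_sum (s t : X -> X) : bounded_linear s -> bounded_linear t ->
  (forall v, s (t v) = vzero) -> QN s -> QN t -> QN (opadd s t).
Proof.
  intros Hs Ht Hst Qs Qt d Hd. set (eps := d / 2). assert (He : 0 < eps) by (unfold eps; lra).
  destruct (QN_absC s Qs eps He) as [Cs [HCs0 HCs]].
  destruct (QN_absC t Qt eps He) as [Ct [HCt0 HCt]].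
  set (C := Cs + Ct + 1).
  assert (widen : forall c k (v : X), 0 <= c <= C ->
            c * eps ^ k * vnorm v <= C * eps ^ k * vnorm v).
  { intros c k v Hc. pose proof (vnorm_ge0 v). assert (0 < eps ^ k) by (apply pow_lt; lra).
    apply Rmult_le_compat_r; auto. apply Rmult_le_compat_r; lra. }
  assert (Bs : forall k v, vnorm (oppow s k v) <= C * eps ^ k * vnorm v)
    by (intros; eapply Rle_trans; [apply HCs|apply widen; unfold C; lra]).
  assert (Bt : forall k v, vnorm (oppow t k v) <= C * eps ^ k * vnorm v)
    by (intros; eapply Rle_trans; [apply HCt|apply widen; unfold C; lra]).
  exists (C * C). intros n v.
  eapply Rle_trans.
  { apply (oppow_orth_sum_bound s t C eps Hs Ht Hst ltac:(unfold C; lra) He Bs Bt n O v). }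
  rewrite Nat.add_0_r. pose proof (half_pow_bound d n Hd). fold eps in H.
  pose proof (vnorm_ge0 v). assert (0 <= C * C) by (unfold C; nra).
  replace (INR (S n) * (C * C) * eps ^ n * vnorm v)
    with ((C * C) * vnorm v * (INR (S n) * eps ^ n)) by ring.
  replace (C * C * d ^ n * vnorm v) with ((C * C) * vnorm v * d ^ n) by ring.
  apply Rmult_le_compat_l; auto. apply Rmult_le_pos; auto.
Qed.

End Quasinilpotent.

Lemma nroot_ge0 n x : 0 <= nroot n x.
Proof. unfold nroot. destruct Rle_dec. lra. unfold Rpower. left; apply exp_pos. Qed.

Lemma nroot_lt n x eps : 0 < eps -> (1 <= n)%nat -> x < eps ^ n -> nroot n x < eps.
Proof.
  intros He Hn Hx. unfold nroot. destruct Rle_dec as [h|h]. auto.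
  assert (0 < INR n) by (apply lt_0_INR; lia).
  unfold Rpower. rewrite <- (exp_ln eps) by auto. apply exp_increasing.
  assert (ln x < INR n * ln eps) by (rewrite <- ln_pow by auto; apply ln_increasing; lra).
  apply (Rmult_lt_reg_l (INR n)). auto. rewrite <- Rmult_assoc, Rinv_r, Rmult_1_l by lra. auto.
Qed.

Lemma nroot_lt_inv n x eps : 0 < eps -> (1 <= n)%nat -> 0 < x -> nroot n x < eps -> x < eps ^ n.
Proof.
  intros He Hn Hx H. unfold nroot in H. destruct Rle_dec as [h|h]. lra.
  assert (0 < INR n) by (apply lt_0_INR; lia).
  unfold Rpower in H. apply ln_lt_inv; auto. apply pow_lt; auto. rewrite ln_pow by auto.
  apply ln_increasing in H. rewrite ln_exp in H.
  apply (Rmult_lt_compat_l (INR n)) in H; auto.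
  rewrite <- Rmult_assoc, Rinv_r, Rmult_1_l in H by lra. auto.
  apply exp_pos.
Qed.

Section NormForm.
Context {X : CBanach}.

Lemma QN_to_qn (f : X -> X) : bounded_linear f -> QN f -> quasinilpotent f.
Proof.
  intros Hf H.
  set (Img n := fun y => exists x : X, vnorm x <= 1 /\ y = vnorm (oppow f n x)).
  assert (Hb : forall n, bound (Img n)).
  { intros n. destruct (QN_absC f H 1) as [C [HC0 HC]]. lra. exists C. intros y [x [Hx ->]].
    eapply Rle_trans. apply HC. rewrite pow1. pose proof (vnorm_ge0 x). nra. }
  assert (Hne : forall n, exists y, Img n y).
  { intros n. exists (vnorm (oppow f n vzero)). exists vzero. rewrite vnorm0. split; auto; lra. }
  exists (fun n => proj1_sig (completeness _ (Hb n) (Hne n))). split.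
  - intros n. destruct completeness as [m Hm]. exact Hm.
  - intros eps He. destruct (QN_absC f H (eps / 2)) as [C [HC0 HC]]. lra.
    destruct (pow_lt_1_zero (/2) ltac:(rewrite Rabs_pos_eq; lra) (/ (C + 1))) as [N HN].
    { apply Rinv_0_lt_compat; lra. }
    exists (S N). intros n Hn. destruct completeness as [m [Hm1 Hm2]]. simpl.
    assert (m0 : 0 <= m).
    { apply Hm1. exists vzero. split. rewrite vnorm0; lra.
      rewrite bl_zero, vnorm0; auto. apply BL_pow, Hf. }
    assert (mb : m <= C * (eps / 2) ^ n).
    { apply Hm2. intros y [x [Hx ->]]. eapply Rle_trans. apply HC.
      assert (0 <= C * (eps / 2) ^ n) by (apply Rmult_le_pos; auto; apply pow_le; lra). nra. }
    specialize (HN n ltac:(lia)). rewrite Rabs_pos_eq in HN by (apply pow_le; lra).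
    assert (E : (eps / 2) ^ n = eps ^ n * (/2) ^ n) by (unfold Rdiv; apply Rpow_mult_distr).
    assert (0 < eps ^ n) by (apply pow_lt; lra). assert (0 <= (/2)^n) by (apply pow_le; lra).
    assert (C * (/2)^n < 1).
    { apply Rle_lt_trans with ((C + 1) * (/2)^n). nra.
      apply (Rmult_lt_compat_l (C+1)) in HN. rewrite Rinv_r in HN by lra. lra. lra. }
    unfold R_dist. rewrite Rminus_0_r, Rabs_pos_eq by apply nroot_ge0.
    apply nroot_lt; auto. lia. rewrite E in mb. nra.
Qed.

Lemma qn_to_QN (f : X -> X) : bounded_linear f -> quasinilpotent f -> QN f.
Proof.
  intros Hf [r [Hr Hcv]].
  assert (B : forall n v, vnorm (oppow f n v) <= r n * vnorm v).
  { intros n v. destruct (Hr n) as [Hub _].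
    destruct (Req_dec (vnorm v) 0) as [h|h].
    - apply vnorm_eq0 in h. subst v. rewrite bl_zero, vnorm0 by (apply BL_pow, Hf). lra.
    - assert (0 < vnorm v) by (pose proof (vnorm_ge0 v); lra).
      set (w := vscal (mkCx (/ vnorm v) 0) v).
      assert (Hw : vnorm w = 1).
      { unfold w. rewrite vnorm_scal, Cmod_real, Rabs_pos_eq. field; lra.
        left; apply Rinv_0_lt_compat; auto. }
      assert (vnorm (oppow f n w) <= r n) by (apply Hub; exists w; split; auto; lra).
      unfold w in H0. rewrite (bl_scal _ (BL_pow f n Hf)), vnorm_scal, Cmod_real, Rabs_pos_eq in H0
        by (left; apply Rinv_0_lt_compat; auto).
      apply (Rmult_le_compat_l (vnorm v)) in H0; [|lra].
      rewrite <- Rmult_assoc, Rinv_r, Rmult_1_l in H0 by lra. lra. }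
  apply QN_of_eventual; auto. intros eps He. destruct (Hcv eps He) as [N HN].
  exists (S N), 1. intros n v Hn. specialize (HN n ltac:(lia)). unfold R_dist in HN.
  rewrite Rminus_0_r, Rabs_pos_eq in HN by apply nroot_ge0.
  eapply Rle_trans. apply B. pose proof (vnorm_ge0 v).
  assert (0 < eps ^ n) by (apply pow_lt; lra).
  destruct (Rle_or_lt (r n) 0) as [h|h]. nra.
  apply nroot_lt_inv in HN; auto; try lia. nra.
Qed.

Definition gD (a x : X -> X) : Prop :=
  bounded_linear x /\ x = opmul x (opmul a x) /\ opmul a x = opmul x a /\
  QN (opsub a (opmul (opmul a a) x)).

Lemma gD_has (a x : X -> X) : bounded_linear a -> gD a x -> has_gDrazin a.
Proof.
  intros Ha [H1 [H2 [H3 H4]]]. exists x. split; [|split; [|split]]; auto.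
  apply QN_to_qn; auto. bl.
Qed.

Lemma has_gD (a : X -> X) : bounded_linear a -> has_gDrazin a -> exists x, gD a x.
Proof.
  intros Ha [x [H1 [H2 [H3 H4]]]]. exists x. split; [|split; [|split]]; auto.
  apply qn_to_QN; auto. bl.
Qed.

(* Annihilation by a quasinilpotent factor: an operator s with s = x s q (or
   s = q s x) for a bounded x and a quasinilpotent q vanishes, because
   s = x^n s q^n and q^n decays faster than x^n grows. *)
Lemma vanish_l (x s q : X -> X) : bounded_linear x -> bounded_linear s -> QN q ->
  (forall v, s v = x (s (q v))) -> forall v, s v = vzero.
Proof.
  intros Hx Hs Hq H v.
  assert (P : forall n, s v = oppow x n (s (oppow q n v))).
  { induction n. reflexivity. rewrite oppow_S_r. simpl oppow at 2. unfold opmul. rewrite <- H. auto. }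
  destruct (bl_bnd x Hx) as [M [HM0 HM]]. destruct (bl_bnd s Hs) as [K [HK0 HK]].
  destruct (QN_beats_growth q M HM0 Hq) as [e [C [He [HC0 [Me HC]]]]].
  pose proof (vnorm_ge0 v).
  apply vnorm_eq0, Rle_antisym; [|apply vnorm_ge0].
  apply (le_half_pow _ (K * C * vnorm v)); [repeat apply Rmult_le_pos; auto|].
  intros n. rewrite (P n). specialize (Me n).
  assert (0 <= M ^ n) by (apply pow_le; auto).
  apply Rle_trans with (M ^ n * (K * (C * e ^ n * vnorm v))).
  { eapply Rle_trans. apply (oppow_bound x M HM0 HM). apply Rmult_le_compat_l; auto.
    eapply Rle_trans. apply HK. apply Rmult_le_compat_l; auto. }
  replace (M ^ n * (K * (C * e ^ n * vnorm v))) with (K * C * vnorm v * (M ^ n * e ^ n)) by ring.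
  apply Rmult_le_compat_l; [repeat apply Rmult_le_pos|]; tauto.
Qed.

Lemma vanish_r (x s q : X -> X) : bounded_linear x -> bounded_linear s -> QN q ->
  (forall v, s v = q (s (x v))) -> forall v, s v = vzero.
Proof.
  intros Hx Hs Hq H v.
  assert (P : forall n, s v = oppow q n (s (oppow x n v))).
  { induction n. reflexivity. rewrite oppow_S_r. simpl oppow at 2. unfold opmul. rewrite <- H. auto. }
  destruct (bl_bnd x Hx) as [M [HM0 HM]]. destruct (bl_bnd s Hs) as [K [HK0 HK]].
  destruct (QN_beats_growth q M HM0 Hq) as [e [C [He [HC0 [Me HC]]]]].
  pose proof (vnorm_ge0 v).
  apply vnorm_eq0, Rle_antisym; [|apply vnorm_ge0].
  apply (le_half_pow _ (K * C * vnorm v)); [repeat apply Rmult_le_pos; auto|].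
  intros n. rewrite (P n). specialize (Me n).
  assert (0 <= C * e ^ n) by (apply Rmult_le_pos; [|apply pow_le]; lra).
  apply Rle_trans with (C * e ^ n * (K * (M ^ n * vnorm v))).
  { eapply Rle_trans. apply HC. apply Rmult_le_compat_l; auto.
    eapply Rle_trans. apply HK. apply Rmult_le_compat_l; auto. apply (oppow_bound x M HM0 HM). }
  replace (C * e ^ n * (K * (M ^ n * vnorm v))) with (K * C * vnorm v * (M ^ n * e ^ n)) by ring.
  apply Rmult_le_compat_l; [repeat apply Rmult_le_pos|]; tauto.
Qed.

End NormForm.

(** * Algebra of g-Drazin inverses *)

Section GDrazin.
Context {X : CBanach}.

Lemma gD_bl (a x : X -> X) : gD a x -> bounded_linear x.
Proof. intros [H _]; exact H. Qed.

Lemma gD_comm (a x : X -> X) : gD a x -> forall w, a (x w) = x (a w).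
Proof. intros [_ [_ [H _]]] w. exact (equal_f H w). Qed.

Lemma gD_inner (a x : X -> X) : gD a x -> forall w, x (x (a w)) = x w.
Proof.
  intros G w. pose proof G as [_ [H _]]. rewrite <- (gD_comm a x G).
  symmetry. exact (equal_f H w).
Qed.

Lemma gD_nil (a : X -> X) k : bounded_linear a -> (forall v, oppow a k v = vzero) -> gD a opzero.
Proof.
  intros Ha Hk. split; [apply BL_zero|split; [|split]].
  - opext. reflexivity.
  - opext. apply bl_zero, Ha.
  - replace (opsub a (opmul (opmul a a) opzero)) with a. eapply QN_nil; eauto.
    opext. rewrite !bl_zero by auto. rewrite vopp0, vadd0. reflexivity.
Qed.

Lemma gD_sq (a x : X -> X) : bounded_linear a -> gD a x -> gD (opmul a a) (opmul x x).
Proof.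
  intros Ha G. pose proof G as [Hx [_ [_ H3]]].
  pose proof (gD_comm a x G) as Hc. pose proof (gD_inner a x G) as Hxx.
  split; [bl|split; [|split]].
  - opext. repeat first [rewrite Hc | rewrite Hxx]. reflexivity.
  - opext. repeat first [rewrite Hc | rewrite Hxx]. reflexivity.
  - set (r := opsub a (opmul (opmul a a) x)) in *.
    replace (opsub (opmul a a) (opmul (opmul (opmul a a) (opmul a a)) (opmul x x)))
      with (opmul r r).
    { apply QN_sq; auto. }
    unfold r. opext. pushlin. repeat first [rewrite Hc | rewrite Hxx]. abel.
Qed.

(* An operator c commuting with a commutes with the spectral idempotent a a^d:
   the two defects s = (ax) c (1 - ax) and t = (1 - ax) c (ax) are annihilated
   by the quasinilpotent part of a. *)
Lemma gD_idempotent_comm (a x c : X -> X) : bounded_linear a -> bounded_linear c -> gD a x ->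
  (forall w, c (a w) = a (c w)) -> forall w, c (a (x w)) = a (x (c w)).
Proof.
  intros Ha Hcb G Hca. pose proof (gD_bl a x G) as Hx. pose proof G as [_ [_ [_ Hq]]].
  pose proof (gD_comm a x G) as Hc. pose proof (gD_inner a x G) as Hxx.
  set (q := opsub a (opmul (opmul a a) x)) in *.
  assert (HQ : bounded_linear q) by (unfold q; bl).
  set (s := fun v => a (x (c (vadd v (vopp (a (x v))))))).
  set (t := fun v => vadd (c (a (x v))) (vopp (a (x (c (a (x v))))))).
  assert (Hs : bounded_linear s).
  { unfold s. apply (BL_mul a); auto. apply (BL_mul x); auto. apply (BL_mul c); auto.
    apply (BL_sub (fun v => v)). apply BL_id. apply BL_mul; auto. }
  assert (Ht : bounded_linear t).
  { unfold t. apply (BL_sub (fun v => c (a (x v)))).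
    - apply BL_mul; auto. apply BL_mul; auto.
    - apply (BL_mul a); auto. apply (BL_mul x); auto. apply (BL_mul c); auto.
      apply BL_mul; auto. }
  assert (Hca' : forall w, a (c w) = c (a w)) by (intros; symmetry; auto).
  assert (Hxxc : forall w, x (x (c (a w))) = x (c w)) by (intros; rewrite Hca, Hxx; reflexivity).
  assert (HR : forall w, x (x (c (x (a w)))) = x (c (x w)))
    by (intros; rewrite <- Hc, Hca, Hxx; reflexivity).
  assert (S0 : forall v, s v = vzero).
  { apply (vanish_l x s q); auto. intros v. unfold s, q, opsub, opmul; cbv beta. pushlin.
    repeat first [rewrite Hc | rewrite Hca' | rewrite Hxx | rewrite Hxxc | rewrite HR]. abel. }
  assert (T0 : forall v, t v = vzero).
  { apply (vanish_r x t q); auto. intros v. unfold t, q, opsub, opmul; cbv beta. pushlin.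
    repeat first [rewrite Hc | rewrite Hca' | rewrite Hxx | rewrite Hxxc | rewrite HR]. abel. }
  intros v. pose proof (S0 v) as E1. pose proof (T0 v) as E2. unfold s, t in *.
  rewrite (bl_add c Hcb), (bl_opp c Hcb), (bl_add x Hx), (bl_add a Ha), (bl_opp x Hx),
    (bl_opp a Ha) in E1.
  apply vsub_eq0 in E1. apply vsub_eq0 in E2. congruence.
Qed.

(* The g-Drazin inverse lies in the double commutant: whatever commutes with a
   commutes with a^d (write a^d = (a a^d) a^d a^d). *)
Lemma gD_double_comm (a x c : X -> X) : bounded_linear a -> bounded_linear c -> gD a x ->
  (forall w, c (a w) = a (c w)) -> forall w, c (x w) = x (c w).
Proof.
  intros Ha Hcb G Hca w. pose proof (gD_comm a x G) as Hc. pose proof (gD_inner a x G) as Hxx.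
  pose proof (gD_idempotent_comm a x c Ha Hcb G Hca) as CK.
  assert (Hca' : forall w, a (c w) = c (a w)) by (intros; symmetry; auto).
  assert (E : x w = a (x (x w))) by (rewrite !Hc, Hxx; reflexivity).
  rewrite E at 1. rewrite CK, Hc, Hca', CK, Hc, Hxx. reflexivity.
Qed.

Lemma gD_of_sq (a y : X -> X) : bounded_linear a -> gD (opmul a a) y -> gD a (opmul a y).
Proof.
  intros Ha G. pose proof G as [Hy [H1 [_ _]]].
  assert (Haa : bounded_linear (opmul a a)) by bl.
  assert (Hay : forall w, a (y w) = y (a w)) by (apply (gD_double_comm (opmul a a) y a); auto).
  assert (Hyy : forall w, y (y (a (a w))) = y w) by (apply (gD_inner (opmul a a) y G)).
  split; [bl|split; [|split]].
  - opext. f_equal. exact (equal_f H1 v).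
  - opext. rewrite Hay. reflexivity.
  - apply QN_of_sq; [bl|].
    replace (opmul (opsub a (opmul (opmul a a) (opmul a y))) (opsub a (opmul (opmul a a) (opmul a y))))
      with (opsub (opmul a a) (opmul (opmul (opmul a a) (opmul a a)) y)) by
      (opext; pushlin; repeat first [rewrite Hay | rewrite Hyy]; abel).
    apply G.
Qed.

Lemma gD_cline (a b x : X -> X) : bounded_linear a -> bounded_linear b -> gD (opmul a b) x ->
  gD (opmul b a) (opmul b (opmul x (opmul x a))).
Proof.
  intros Ha Hb G. pose proof G as [Hx [_ [_ H3]]].
  pose proof (gD_comm (opmul a b) x G) as Hc. pose proof (gD_inner (opmul a b) x G) as Hxx.
  unfold opmul in Hc, Hxx.
  split; [bl|split; [|split]].
  - opext. repeat first [rewrite Hc | rewrite Hxx]. reflexivity.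
  - opext. repeat first [rewrite Hc | rewrite Hxx]. reflexivity.
  - set (g := opsub a (opmul x (opmul a (opmul b a)))).
    assert (Hg : bounded_linear g) by (unfold g; bl).
    replace (opsub (opmul b a) (opmul (opmul (opmul b a) (opmul b a)) (opmul b (opmul x (opmul x a)))))
      with (opmul b g)
      by (unfold g; opext; pushlin; repeat first [rewrite Hc | rewrite Hxx]; reflexivity).
    apply QN_comm; auto.
    replace (opmul g b) with (opsub (opmul a b) (opmul (opmul (opmul a b) (opmul a b)) x)); auto.
    unfold g; opext. pushlin. repeat first [rewrite Hc | rewrite Hxx]. reflexivity.
Qed.

End GDrazin.

(** * The additive theorem for orthogonal summands *)

Section AddGroupInverse.
Context {X : CBanach}.

Definition group_inverse (p p' : X -> X) : Prop :=
  (forall w, p' (p (p' w)) = p' w) /\ (forall w, p (p' w) = p' (p w)) /\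
  (forall w, p (p (p' w)) = p w).

Lemma gD_group_part (p p' : X -> X) : gD p p' -> group_inverse (opmul (opmul p p) p') p'.
Proof.
  intros G. pose proof (gD_comm p p' G) as Pc. pose proof (gD_inner p p' G) as P1.
  split; [|split]; intros w; unfold opmul; repeat first [rewrite Pc | rewrite P1]; reflexivity.
Qed.

Lemma gD_add_group (p p' q q' : X -> X) :
  bounded_linear p -> bounded_linear p' -> bounded_linear q -> bounded_linear q' ->
  group_inverse p p' -> group_inverse q q' -> (forall w, p (q w) = vzero) ->
  gD (opadd p q) (opsub (opsub (opadd p' q') (opmul q (opmul q' p'))) (opmul q' (opmul p p'))).
Proof.
  intros Hp Hp' Hq Hq' [P1 [Pc P2]] [Q1 [Qc Q2]] Z.
  assert (P1' : forall w, p' (p' (p w)) = p' w) by (intros; rewrite <- Pc; auto).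
  assert (P2' : forall w, p' (p (p w)) = p w) by (intros; rewrite <- Pc, <- Pc; auto).
  assert (Q1' : forall w, q' (q' (q w)) = q' w) by (intros; rewrite <- Qc; auto).
  assert (Q2' : forall w, q' (q (q w)) = q w) by (intros; rewrite <- Qc, <- Qc; auto).
  assert (Z1 : forall w, p' (q w) = vzero) by (intros; rewrite <- (P1' (q w)), Z, !bl_zero; auto).
  assert (Z2 : forall w, p (q' w) = vzero) by (intros; rewrite <- (Q1 w), <- Qc, Z; auto).
  assert (Z3 : forall w, p' (q' w) = vzero) by (intros; rewrite <- (Q1 w), <- Qc, Z1; auto).
  split; [bl|split; [|split]];
    [| | match goal with |- QN ?r => replace r with (@opzero X);
           [apply (QN_nil _ 1); [bl|intros; reflexivity]|] end].
  all: opext; pushlin;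
    repeat first [rewrite Pc | rewrite P1' | rewrite P2' | rewrite Qc | rewrite Q1'
                 | rewrite Q2' | rewrite Z | rewrite Z1 | rewrite Z2 | rewrite Z3
                 | rewrite (bl_zero _ Hp) | rewrite (bl_zero _ Hp')
                 | rewrite (bl_zero _ Hq) | rewrite (bl_zero _ Hq')];
    abel.
Qed.

End AddGroupInverse.

Section AddQuasinilpotentRight.
Context {X : CBanach}.
Variables p p' q : X -> X.
Hypothesis Hp : bounded_linear p.
Hypothesis Hq : bounded_linear q.
Hypothesis Gp : gD p p'.
Hypothesis Qq : QN q.
Hypothesis Hpq : forall w, p (q w) = vzero.

(* The candidate inverse of p + q is the series x = sum_n q^n p'^(n+1), and
   W = q x = sum_n q^(n+1) p'^(n+1) is its "tail". *)
Definition qr_term (n : nat) : X -> X := opmul (oppow q n) (oppow p' (S n)).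
Definition qr_inv : X -> X := series qr_term.
Definition qr_tail : X -> X := series (fun n => opmul q (qr_term n)).

Lemma qr_pinv_bl : bounded_linear p'.
Proof. exact (gD_bl p p' Gp). Qed.

Lemma qr_pinv_q w : p' (q w) = vzero.
Proof.
  pose proof qr_pinv_bl. rewrite <- (gD_inner p p' Gp (q w)), Hpq, !bl_zero; auto.
Qed.

Lemma qr_term_bl n : bounded_linear (qr_term n).
Proof. pose proof qr_pinv_bl. unfold qr_term. bl. Qed.

(* The terms decay geometrically: q^n decays faster than p'^(n+1) grows. *)
Lemma qr_term_GB : GB qr_term.
Proof.
  destruct (bl_bnd p' qr_pinv_bl) as [M [HM0 HM]].
  destruct (QN_beats_growth q M HM0 Qq) as [e [C [He [HC0 [HMe HC]]]]].
  exists (C * M), (/2). split. apply Rmult_le_pos; auto. split. lra.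
  intros n v. unfold qr_term, opmul. eapply Rle_trans. apply HC.
  assert (0 <= C * e ^ n) by (apply Rmult_le_pos; [|apply pow_le]; lra).
  eapply Rle_trans. apply Rmult_le_compat_l. auto. apply (oppow_bound p' M HM0 HM (S n)).
  pose proof (vnorm_ge0 v). specialize (HMe n). simpl.
  replace (C * e ^ n * (M * M ^ n * vnorm v)) with ((C * M * vnorm v) * (M ^ n * e ^ n)) by ring.
  replace (C * M * (/ 2) ^ n * vnorm v) with ((C * M * vnorm v) * (/ 2) ^ n) by ring.
  apply Rmult_le_compat_l. repeat apply Rmult_le_pos; auto. lra.
Qed.

Lemma qr_tail_GB : GB (fun n => opmul q (qr_term n)).
Proof. apply GB_compl; auto. apply qr_term_GB. Qed.

Lemma qr_inv_bl : bounded_linear qr_inv.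
Proof. apply series_BL. apply qr_term_GB. apply qr_term_bl. Qed.

Lemma qr_tail_bl : bounded_linear qr_tail.
Proof. apply series_BL. apply qr_tail_GB. intros n. apply BL_mul; auto. apply qr_term_bl. Qed.

(* Only the n = 0 term survives multiplication by p on the left. *)
Lemma qr_p_inv v : p (qr_inv v) = p (p' v).
Proof.
  unfold qr_inv. rewrite series_compl, series_shift by (auto using GB_compl, qr_term_GB).
  rewrite series_zero, vadd0. reflexivity.
  intros n w. unfold qr_term, opmul. simpl. unfold opmul. apply Hpq.
Qed.

Lemma qr_pinv_inv v : p' (qr_inv v) = p' (p' v).
Proof.
  pose proof qr_pinv_bl.
  unfold qr_inv. rewrite series_compl, series_shift by (auto using GB_compl, qr_term_GB).
  rewrite series_zero, vadd0. reflexivity.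
  intros n w. unfold qr_term, opmul. simpl. unfold opmul. apply qr_pinv_q.
Qed.

Lemma qr_q_inv v : q (qr_inv v) = qr_tail v.
Proof. unfold qr_inv, qr_tail. apply series_compl; auto. apply qr_term_GB. Qed.

Lemma qr_p_tail v : p (qr_tail v) = vzero.
Proof.
  unfold qr_tail. rewrite series_compl by (auto using qr_tail_GB).
  apply series_zero. intros n w. unfold opmul. apply Hpq.
Qed.

Lemma qr_inv_q v : qr_inv (q v) = vzero.
Proof.
  pose proof qr_pinv_bl.
  unfold qr_inv. rewrite series_compr. apply series_zero. intros n w. unfold qr_term, opmul.
  rewrite oppow_S_r, qr_pinv_q, !bl_zero; auto; apply BL_pow; auto.
Qed.

Lemma qr_tail_q v : qr_tail (q v) = vzero.
Proof.
  pose proof qr_pinv_bl.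
  unfold qr_tail. rewrite series_compr. apply series_zero. intros n w. unfold qr_term, opmul.
  rewrite oppow_S_r, qr_pinv_q, !bl_zero; auto; apply BL_pow; auto.
Qed.

(* x p = p p' + W, since p'^(n+2) p = p'^(n+1). *)
Lemma qr_inv_p v : qr_inv (p v) = vadd (p (p' v)) (qr_tail v).
Proof.
  pose proof (gD_comm p p' Gp) as Pc. pose proof (gD_inner p p' Gp) as P1'.
  unfold qr_inv. rewrite series_compr, series_shift by (auto using GB_compr, qr_term_GB).
  f_equal.
  - unfold qr_term, opmul; simpl. symmetry; apply Pc.
  - unfold qr_tail. f_equal.
    apply functional_extensionality; intro n. apply functional_extensionality; intro w.
    unfold qr_term, opmul. rewrite !oppow_S_r, P1', <- oppow_S_r. reflexivity.
Qed.

Lemma qr_inv_unfold v : qr_inv v = vadd (p' v) (qr_tail (qr_inv v)).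
Proof.
  pose proof qr_pinv_bl.
  assert (ZQ : forall n z, p' (oppow p' n (q z)) = vzero).
  { intros n z. change (oppow p' (S n) (q z) = vzero).
    rewrite oppow_S_r, qr_pinv_q. apply bl_zero, BL_pow; auto. }
  assert (E : qr_tail (qr_inv v) = series (fun n => qr_term (S n)) v).
  { unfold qr_tail. rewrite series_compr. f_equal.
    apply functional_extensionality; intro n. apply functional_extensionality; intro w.
    unfold opmul at 1. unfold qr_inv.
    rewrite series_compl, series_shift by (auto using GB_compl, BL_mul, qr_term_GB, qr_term_bl).
    rewrite series_zero, vadd0.
    - unfold qr_term, opmul. simpl. unfold opmul. do 3 f_equal. rewrite <- oppow_S_r. reflexivity.
    - intros m u. unfold qr_term, opmul. simpl. unfold opmul.
      rewrite ZQ, !bl_zero; auto; apply BL_pow; auto. }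
  rewrite E. unfold qr_inv at 1. rewrite series_shift by (apply qr_term_GB). reflexivity.
Qed.

Lemma gD_add_qnil_r : gD (opadd p q) qr_inv.
Proof.
  pose proof qr_pinv_bl as Hp'. pose proof qr_inv_bl as Hx. pose proof qr_tail_bl as HW.
  pose proof (gD_comm p p' Gp) as Pc. pose proof Gp as [_ [H1 [_ H3]]].
  assert (P1 : forall w, p' (p (p' w)) = p' w) by (intros; symmetry; exact (equal_f H1 w)).
  split; [exact Hx|split; [|split]].
  - opext. unfold opadd. rewrite (bl_add qr_inv Hx), qr_inv_p, qr_inv_q, qr_pinv_inv, Pc, P1.
    rewrite vadd0. apply qr_inv_unfold.
  - opext. unfold opadd. rewrite (bl_add qr_inv Hx), qr_inv_p, qr_inv_q, qr_p_inv, qr_q_inv.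
    rewrite vadd0. reflexivity.
  - (* The residual splits as (p - p^2 p') + q E with E = 1 - p p' - W, and
       (p - p^2 p') (q E) = 0; both parts are quasinilpotent. *)
    set (E := opsub (opsub (fun v => v) (opmul p p')) qr_tail).
    assert (HE : bounded_linear E) by (unfold E; bl).
    set (s := opsub p (opmul (opmul p p) p')). set (t := opmul q E).
    replace (opsub (opadd p q) (opmul (opmul (opadd p q) (opadd p q)) qr_inv)) with (opadd s t).
    + apply QN_sum; [unfold s; bl|unfold t; bl| |exact H3|].
      * intros v. unfold s, t, opsub, opmul.
        rewrite Hpq, qr_pinv_q, !bl_zero by auto. rewrite vopp0, vadd0. reflexivity.
      * unfold t. apply QN_comm; auto.
        replace (opmul E q) with q; auto. unfold E. opext. pushlin.
        rewrite qr_pinv_q, qr_tail_q, bl_zero by auto. rewrite !vopp0, !vadd0. reflexivity.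
    + opext. unfold s, t, E, opsub, opmul, opadd. rewrite qr_p_inv, qr_q_inv. pushlin.
      rewrite qr_p_tail. abel.
Qed.

End AddQuasinilpotentRight.

Section AddQuasinilpotentLeft.
Context {X : CBanach}.
Variables p q q' : X -> X.
Hypothesis Hp : bounded_linear p.
Hypothesis Hq : bounded_linear q.
Hypothesis Qp : QN p.
Hypothesis Gq : gD q q'.
Hypothesis Hpq : forall w, p (q w) = vzero.

(* Mirror image of the previous section: the candidate inverse of p + q is
   x = sum_n q'^(n+1) p^n, and W = x p = sum_n q'^(n+1) p^(n+1). *)
Definition ql_term (n : nat) : X -> X := opmul (oppow q' (S n)) (oppow p n).
Definition ql_inv : X -> X := series ql_term.
Definition ql_tail : X -> X := series (fun n => opmul (ql_term n) p).

Lemma ql_qinv_bl : bounded_linear q'.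
Proof. exact (gD_bl q q' Gq). Qed.

Lemma ql_q_qinv2 w : q (q' (q' w)) = q' w.
Proof.
  pose proof Gq as [_ [H1 _]]. rewrite (gD_comm q q' Gq). symmetry. exact (equal_f H1 w).
Qed.

Lemma ql_p_qinv w : p (q' w) = vzero.
Proof. rewrite <- (ql_q_qinv2 w), Hpq. reflexivity. Qed.

Lemma ql_pow_q n z : oppow p (S n) (q z) = vzero.
Proof. rewrite oppow_S_r, Hpq. apply bl_zero, BL_pow; auto. Qed.

Lemma ql_pow_qinv n z : oppow p (S n) (q' z) = vzero.
Proof. rewrite oppow_S_r, ql_p_qinv. apply bl_zero, BL_pow; auto. Qed.

Lemma ql_term_bl n : bounded_linear (ql_term n).
Proof. pose proof ql_qinv_bl. unfold ql_term. bl. Qed.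

Lemma ql_term_GB : GB ql_term.
Proof.
  destruct (bl_bnd q' ql_qinv_bl) as [M [HM0 HM]].
  destruct (QN_beats_growth p M HM0 Qp) as [e [C [He [HC0 [HMe HC]]]]].
  exists (C * M), (/2). split. apply Rmult_le_pos; auto. split. lra.
  intros n v. unfold ql_term, opmul. eapply Rle_trans. apply (oppow_bound q' M HM0 HM (S n)).
  assert (0 <= M ^ S n) by (apply pow_le; auto).
  eapply Rle_trans. apply Rmult_le_compat_l. auto. apply HC.
  pose proof (vnorm_ge0 v). specialize (HMe n). simpl.
  replace (M * M ^ n * (C * e ^ n * vnorm v)) with ((C * M * vnorm v) * (M ^ n * e ^ n)) by ring.
  replace (C * M * (/ 2) ^ n * vnorm v) with ((C * M * vnorm v) * (/ 2) ^ n) by ring.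
  apply Rmult_le_compat_l. repeat apply Rmult_le_pos; auto. lra.
Qed.

Lemma ql_tail_GB : GB (fun n => opmul (ql_term n) p).
Proof. apply GB_compr; auto. apply ql_term_GB. Qed.

Lemma ql_inv_bl : bounded_linear ql_inv.
Proof. apply series_BL. apply ql_term_GB. apply ql_term_bl. Qed.

Lemma ql_tail_bl : bounded_linear ql_tail.
Proof. apply series_BL. apply ql_tail_GB. intros n. apply BL_mul; auto. apply ql_term_bl. Qed.

(* Only the n = 0 term survives multiplication by q on the right. *)
Lemma ql_inv_q v : ql_inv (q v) = q' (q v).
Proof.
  unfold ql_inv. rewrite series_compr, series_shift by (auto using GB_compr, ql_term_GB).
  rewrite series_zero, vadd0. reflexivity.
  intros n w. unfold ql_term, opmul. rewrite ql_pow_q. apply bl_zero, BL_pow, ql_qinv_bl.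
Qed.

Lemma ql_inv_qinv_q v : ql_inv (q' (q v)) = q' v.
Proof.
  pose proof ql_qinv_bl.
  unfold ql_inv. rewrite series_compr, series_shift by (auto using GB_compr, BL_mul, ql_term_GB).
  rewrite series_zero, vadd0.
  - unfold ql_term, opmul. simpl. unfold opmul. rewrite (gD_inner q q' Gq). reflexivity.
  - intros n w. unfold ql_term, opmul. rewrite ql_pow_qinv. apply bl_zero, BL_pow; auto.
Qed.

Lemma ql_inv_p v : ql_inv (p v) = ql_tail v.
Proof. unfold ql_inv, ql_tail. apply series_compr. Qed.

Lemma ql_p_inv v : p (ql_inv v) = vzero.
Proof.
  unfold ql_inv. rewrite series_compl by (auto using ql_term_GB).
  apply series_zero. intros n w. unfold ql_term, opmul. simpl. unfold opmul. apply ql_p_qinv.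
Qed.

Lemma ql_p_tail v : p (ql_tail v) = vzero.
Proof.
  unfold ql_tail. rewrite series_compl by (auto using ql_tail_GB, ql_term_bl).
  apply series_zero. intros n w. unfold ql_term, opmul. simpl. unfold opmul. apply ql_p_qinv.
Qed.

(* q x = q'q + W, since q q'^(n+2) = q'^(n+1). *)
Lemma ql_q_inv v : q (ql_inv v) = vadd (q' (q v)) (ql_tail v).
Proof.
  pose proof ql_qinv_bl.
  unfold ql_inv. rewrite series_compl, series_shift by (auto using GB_compl, ql_term_GB).
  f_equal.
  - unfold ql_term, opmul. simpl. unfold opmul. apply (gD_comm q q' Gq).
  - unfold ql_tail. f_equal.
    apply functional_extensionality; intro n. apply functional_extensionality; intro w.
    unfold ql_term, opmul. simpl. unfold opmul. rewrite ql_q_qinv2, <- oppow_S_r. reflexivity.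
Qed.

Lemma ql_q_tail v : q (ql_tail v) = vadd (q' (q (p v))) (ql_tail (p v)).
Proof.
  pose proof ql_qinv_bl.
  unfold ql_tail. rewrite series_compl, series_shift by (auto using GB_compl, ql_tail_GB).
  f_equal.
  - unfold ql_term, opmul. simpl. unfold opmul. apply (gD_comm q q' Gq).
  - rewrite series_compr. f_equal.
    apply functional_extensionality; intro n. apply functional_extensionality; intro w.
    unfold ql_term, opmul. simpl. unfold opmul. rewrite ql_q_qinv2, <- !oppow_S_r. reflexivity.
Qed.

Lemma ql_inv_unfold v : ql_inv v = vadd (q' v) (ql_inv (ql_tail v)).
Proof.
  pose proof ql_qinv_bl.
  assert (E : ql_inv (ql_tail v) = series (fun n => ql_term (S n)) v).
  { unfold ql_inv at 1. rewrite series_compr, series_shift by (auto using GB_compr, ql_tail_bl, ql_term_GB).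
    rewrite series_zero, vadd0.
    - unfold opmul at 1. unfold ql_tail. rewrite series_compl by (auto using ql_tail_GB, ql_term_bl). f_equal.
      apply functional_extensionality; intro n. apply functional_extensionality; intro w.
      unfold ql_term, opmul. simpl. unfold opmul. rewrite <- !oppow_S_r. reflexivity.
    - intros n w. unfold opmul at 1. unfold ql_tail. rewrite series_compl by (auto using ql_tail_GB, ql_term_bl).
      apply series_zero. intros m u. unfold ql_term, opmul.
      replace (oppow p (S n) (oppow q' (S m) (oppow p m (p u)))) with (@vzero X)
        by (symmetry; apply ql_pow_qinv).
      apply bl_zero, BL_pow; auto. }
  rewrite E. unfold ql_inv at 1. rewrite series_shift by (apply ql_term_GB). reflexivity.
Qed.

Lemma gD_add_qnil_l : gD (opadd p q) ql_inv.
Proof.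
  pose proof ql_qinv_bl as Hq'. pose proof ql_inv_bl as Hx. pose proof ql_tail_bl as HW.
  pose proof Gq as [_ [_ [_ H3]]].
  split; [exact Hx|split; [|split]].
  - opext. unfold opadd. rewrite ql_p_inv, ql_q_inv, vadd0l, (bl_add ql_inv Hx), ql_inv_qinv_q.
    rewrite <- ql_inv_unfold. reflexivity.
  - opext. unfold opadd. rewrite ql_p_inv, ql_q_inv, vadd0l, (bl_add ql_inv Hx), ql_inv_q, ql_inv_p.
    apply vaddC.
  - (* The residual splits as E p + (q - q^2 q') with E = 1 - q'q - W, where
       E p (q - q^2 q') = 0; both parts are quasinilpotent. *)
    set (E := opsub (opsub (fun v => v) (opmul q' q)) ql_tail).
    assert (HE : bounded_linear E) by (unfold E; bl).
    set (s := opmul E p). set (t := opsub q (opmul (opmul q q) q')).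
    replace (opsub (opadd p q) (opmul (opmul (opadd p q) (opadd p q)) ql_inv)) with (opadd s t).
    + apply QN_sum; [unfold s; bl|unfold t; bl| | |exact H3].
      * intros v. unfold s, t, opsub, opmul. pushlin. rewrite !Hpq. pushlin. rewrite ?vopp0. abel.
      * unfold s. apply QN_comm; auto.
        replace (opmul p E) with p; auto. unfold E. opext. pushlin.
        rewrite ql_p_qinv, ql_p_tail, !vopp0, !vadd0. reflexivity.
    + opext. unfold s, t, E, opsub, opmul, opadd. rewrite ql_p_inv, ql_q_inv. pushlin.
      rewrite ql_p_qinv, ql_p_tail, ql_q_tail, (gD_comm q q' Gq). abel.
Qed.

End AddQuasinilpotentLeft.

Section AddOrthogonal.
Context {X : CBanach}.

(* Split p = p1 + p2 and q = q1 + q2 into the group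
   invertible parts p1 = p^2 p', q1 = q^2 q' and the quasinilpotent residuals;
   then p + q = p2 + ((p1 + q1) + q2), where p1 + q1 has a group inverse, q2 is
   added on the right and p2 on the left, each with vanishing product. *)
Lemma gD_add_orth (p p' q q' : X -> X) : bounded_linear p -> bounded_linear q ->
  gD p p' -> gD q q' -> (forall w, p (q w) = vzero) -> exists z, gD (opadd p q) z.
Proof.
  intros Hp Hq Gp Gq Z.
  pose proof (gD_bl p p' Gp) as Hp'. pose proof (gD_bl q q' Gq) as Hq'.
  pose proof (gD_comm p p' Gp) as Pc. pose proof (gD_inner p p' Gp) as P1.
  pose proof (gD_comm q q' Gq) as Qc. pose proof (gD_inner q q' Gq) as Q1.
  assert (Z1 : forall w, p' (q w) = vzero) by (intros; rewrite <- (P1 (q w)), Z, !bl_zero; auto).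
  set (p1 := opmul (opmul p p) p'). set (q1 := opmul (opmul q q) q').
  set (p2 := opsub p p1). set (q2 := opsub q q1).
  assert (Hp1 : bounded_linear p1) by (unfold p1; bl).
  assert (Hq1 : bounded_linear q1) by (unfold q1; bl).
  assert (Hp2 : bounded_linear p2) by (unfold p2; bl).
  assert (Hq2 : bounded_linear q2) by (unfold q2; bl).
  assert (G5 := gD_add_group p1 p' q1 q' Hp1 Hp' Hq1 Hq' (gD_group_part p p' Gp)
                  (gD_group_part q q' Gq)
                  ltac:(intros w; unfold p1, q1, opmul; rewrite Z1, !bl_zero; auto)).
  assert (G1 := gD_add_qnil_r (opadd p1 q1) _ q2 ltac:(bl) Hq2 G5 (proj2 (proj2 (proj2 Gq)))
    ltac:(intros w; unfold q2, p1, q1, opadd, opsub, opmul; pushlin; rewrite !Z1; pushlin;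
          repeat first [rewrite Qc | rewrite Q1]; abel)).
  assert (G2 := gD_add_qnil_l p2 (opadd (opadd p1 q1) q2) _ Hp2 ltac:(bl) (proj2 (proj2 (proj2 Gp))) G1
    ltac:(intros w; unfold q2, p2, p1, q1, opadd, opsub, opmul; pushlin; rewrite ?Z, ?Z1;
          pushlin; repeat first [rewrite Pc | rewrite P1]; abel)).
  eexists. replace (opadd p q) with (opadd p2 (opadd (opadd p1 q1) q2)); [exact G2|].
  unfold p2, q2. opext. abel.
Qed.

End AddOrthogonal.

Theorem lemma2p4 (X : CBanach) (a b : X -> X)
  (Ha : bounded_linear a) (Hb : bounded_linear b)
  (Hda : has_gDrazin a) (Hdb : has_gDrazin b)
  (Haba : opmul a (opmul b a) = opzero)
  (Habb : opmul a (opmul b b) = opzero) :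
  has_gDrazin (opadd a b).
Proof.
  destruct (has_gD a Ha Hda) as [xa Ga]. destruct (has_gD b Hb Hdb) as [xb Gb].
  assert (Z1 : forall v, a (b (a v)) = vzero) by (intros; exact (equal_f Haba v)).
  assert (Z2 : forall v, a (b (b v)) = vzero) by (intros; exact (equal_f Habb v)).
  set (c := opadd a b). assert (Hc : bounded_linear c) by (unfold c; bl).
  (* ab and ba are nilpotent: (ab)^2 = (aba)b = 0 and (ba)^3 = b(aba)ba = 0. *)
  assert (Gab : gD (opmul a b) opzero).
  { apply (gD_nil _ 2); [bl|]. intros v. simpl. unfold opmul. rewrite Z1. reflexivity. }
  assert (Gba : gD (opmul b a) opzero).
  { apply (gD_nil _ 3); [bl|]. intros v. simpl. unfold opmul. rewrite Z1. apply bl_zero, Hb. }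
  (* ca = a^2 + ba with a^2 . ba = 0, hence ac is g-Drazin invertible by Cline. *)
  destruct (gD_add_orth (opmul a a) _ (opmul b a) _ ltac:(bl) ltac:(bl) (gD_sq a xa Ha Ga) Gba)
    as [z1 G1].
  { intros w. unfold opmul. rewrite Z1. apply bl_zero, Ha. }
  pose proof (gD_cline c a z1 Hc Ha G1) as Gac.
  (* cb = ab + b^2 with ab . b^2 = 0, hence bc is g-Drazin invertible. *)
  destruct (gD_add_orth (opmul a b) _ (opmul b b) _ ltac:(bl) ltac:(bl) Gab (gD_sq b xb Hb Gb))
    as [z2 G2].
  { intros w. unfold opmul. rewrite Z2. reflexivity. }
  pose proof (gD_cline c b z2 Hc Hb G2) as Gbc.
  (* c^2 = ac + bc with ac . bc = 0, so c^2 and then c are g-Drazin invertible. *)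
  destruct (gD_add_orth (opmul a c) _ (opmul b c) _ ltac:(bl) ltac:(bl) Gac Gbc) as [z3 G3].
  { intros w. unfold opmul, c, opadd. pushlin. rewrite !Z1, !Z2. pushlin. rewrite vadd0. apply vadd0. }
  apply (gD_has c (opmul c z3) Hc). apply gD_of_sq; auto.
Qed.
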